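(* Let $K$ be a field, $Q$ the bipartite type $A$ quiver with vertices $y_0,x_1,\dots,x_n,y_n$ and arrows $\alpha_i\colon x_i\to y_{i-1}$, $\beta_i\colon x_i\to y_i$, and $\mathbf{d}$ a dimension vector. A matrix $Z\in Y^{\mathbf{w}}_\circ$ lies in the image of $\zeta$ if and only if both (NW) $\operatorname{rank}Z_{y_i\times x_j}=0$ for all $0\le i\le n-2$ and $i+2\le j\le n$, and (SE) $\operatorname{rank}Z_{x_i\times y_j}=\sum_{k=i}^n\mathbf{d}(x_k)+\sum_{k=0}^j\mathbf{d}(y_k)$ for all $2\le i\le n$ and $i-1\le j\le n-1$.
   Context: $d_x=\sum\mathbf{d}(x_i)$, $d_y=\sum\mathbf{d}(y_i)$, $d=d_x+d_y$. $Y^{\mathbf{w}}_\circ$ is the set of $d\times d$ matrices $\begin{pmatrix}*&\mathbf{1}_{d_y}\\ \mathbf{1}_{d_x}&0\end{pmatrix}$ with $*$ an arbitrary $d_y\times d_x$ block. Block rows of such a matrix are labeled, top to bottom, $y_0,\dots,y_n,x_n,\dots,x_1$ (of sizes $\mathbf{d}$ of the label) and block columns, left to right, $x_n,\dots,x_1,y_0,\dots,y_n$. For vertices $v,v'$, $Z_{v\times v'}$ is the northwest-justified submatrix of $Z$ whose southeast corner is the block in block row $v$ and block column $v'$. For $V\in\mathrm{rep}_Q(\mathbf{d})$ (tuples $V_a\in\mathrm{Mat}_{\mathbf{d}(ha)\times\mathbf{d}(ta)}(K)$), $M_Q(V)$ is the block matrix with block rows $y_0,\dots,y_n$ and block columns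 $x_n,\dots,x_1$, $V_{\alpha_i}$ in block $(y_{i-1},x_i)$, $V_{\beta_i}$ in block $(y_i,x_i)$, zeros elsewhere, and $\zeta(V)=\begin{pmatrix}M_Q(V)&\mathbf{1}_{d_y}\\ \mathbf{1}_{d_x}&0\end{pmatrix}$. *)

From HB Require Import structures.
From mathcomp Require Import all_boot all_order all_algebra.
Set Implicit Arguments. Unset Strict Implicit. Unset Printing Implicit Defensive.
Import GRing.Theory.
Local Open Scope ring_scope.

(* Dimension vector d of the quiver with vertices y_0,x_1,y_1,...,x_n,y_n is
   encoded by dy : nat -> nat (dy j = d(y_j), 0 <= j <= n) and
   dx : nat -> nat (dx i = d(x_i), 1 <= i <= n); other values are unused. *)

Definition dY (dy : nat -> nat) (n : nat) : nat := (\sum_(k < n.+1) dy k)%N.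
Definition dX (dx : nat -> nat) (n : nat) : nat := (\sum_(1 <= k < n.+1) dx k)%N.

Definition yoff (dy : nat -> nat) (i : nat) : nat := (\sum_(k < i) dy k)%N.
(* Offset of block column x_i (columns ordered x_n,...,x_1): blocks x_n..x_{i+1}. *)
Definition xoff (dx : nat -> nat) (n i : nat) : nat := (\sum_(i.+1 <= k < n.+1) dx k)%N.

Definition embed_block (K : fieldType) (m m' p q : nat) (ro co : nat)
  (A : 'M[K]_(p, q)) : 'M[K]_(m, m') :=
  \matrix_(r < m, c < m')
    \sum_(a < p) \sum_(b < q)
      (((r : nat) == ro + a)%N && ((c : nat) == co + b)%N)%:R * A a b.

(* A representation V in rep_Q(d): V_{alpha_i} : d(y_{i-1}) x d(x_i),
   V_{beta_i} : d(y_i) x d(x_i), for 1 <= i <= n (other indices unused). *)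
Record rep (K : fieldType) (dy dx : nat -> nat) := Rep {
  Valpha : forall i : nat, 'M[K]_(dy i.-1, dx i);
  Vbeta  : forall i : nat, 'M[K]_(dy i, dx i) }.

(* M_Q(V): block rows y_0..y_n, block columns x_n..x_1, V_{alpha_i} in block
   (y_{i-1}, x_i), V_{beta_i} in block (y_i, x_i), zero elsewhere. *)
Definition MQ (K : fieldType) (n : nat) (dy dx : nat -> nat) (V : rep K dy dx)
  : 'M[K]_(dY dy n, dX dx n) :=
  \sum_(1 <= i < n.+1)
     (embed_block _ _ (yoff dy i.-1) (xoff dx n i) (Valpha V i)
    + embed_block _ _ (yoff dy i) (xoff dx n i) (Vbeta V i)).

Definition zeta (K : fieldType) (n : nat) (dy dx : nat -> nat) (V : rep K dy dx)
  : 'M[K]_(dY dy n + dX dx n, dX dx n + dY dy n) :=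
  block_mx (MQ n V) 1%:M 1%:M 0.

Definition in_Ycirc (K : fieldType) (n : nat) (dy dx : nat -> nat)
  (Z : 'M[K]_(dY dy n + dX dx n, dX dx n + dY dy n)) : Prop :=
  exists S : 'M[K]_(dY dy n, dX dx n), Z = block_mx S 1%:M 1%:M 0.

(* Rank of the northwest-justified r x c submatrix of Z (r, c truncated to
   the size of Z, which never happens in the uses below). *)
Definition nw_rank (K : fieldType) (m m' : nat) (Z : 'M[K]_(m, m')) (r c : nat) : nat :=
  \rank (\matrix_(i < minn r m, j < minn c m')
           Z (widen_ord (geq_minr r m) i) (widen_ord (geq_minr c m') j)).

(* rank Z_{y_i x x_j}: rows through block row y_i, columns through block column x_j *)
Definition rank_yx (K : fieldType) (n : nat) (dy dx : nat -> nat)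
  (Z : 'M[K]_(dY dy n + dX dx n, dX dx n + dY dy n)) (i j : nat) : nat :=
  nw_rank Z (\sum_(k < i.+1) dy k)%N (\sum_(j <= k < n.+1) dx k)%N.

(* rank Z_{x_i x y_j}: rows through block row x_i (rows y_0..y_n, x_n..x_i),
   columns through block column y_j (columns x_n..x_1, y_0..y_j) *)
Definition rank_xy (K : fieldType) (n : nat) (dy dx : nat -> nat)
  (Z : 'M[K]_(dY dy n + dX dx n, dX dx n + dY dy n)) (i j : nat) : nat :=
  nw_rank Z (dY dy n + \sum_(i <= k < n.+1) dx k)%N
            (dX dx n + \sum_(k < j.+1) dy k)%N.

From HB Require Import structures.
From mathcomp Require Import all_boot all_order all_algebra zify.
Set Implicit Arguments. Unset Strict Implicit. Unset Printing Implicit Defensive.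
Import GRing.Theory.
Local Open Scope ring_scope.

(* Write Z = [[S, 1], [1, 0]].  Then Z = zeta V for some V exactly when S vanishes
   outside the blocks (y_(i-1), x_i) and (y_i, x_i) in which M_Q(V) places V_alpha_i
   and V_beta_i.  The submatrices in (NW) lie inside S, so their rank is 0 iff S
   vanishes there.  A submatrix in (SE) has the shape [[S, 1_R], [1_C, 0]]: clearing
   the first R rows and C columns of S with its identity rows and columns shows that
   its rank is C + R plus the rank of the remaining corner of S, so (SE) says that
   this corner vanishes.  Together the zero regions required by (NW) and (SE) are
   exactly the blocks that carry no arrow. *)

Section BlockRank.

Variable K : fieldType.

Lemma mxrank_add_disjoint m n (A B : 'M[K]_(m, n)) (P : 'M_m) (Q : 'M_n) :
  P *m A = A -> P *m B = 0 -> A *m Q = A -> B *m Q = 0 ->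
  \rank (A + B)%R = (\rank A + \rank B)%N.
Proof.
move=> PA PB AQ BQ.
have eqAB : ((A + B)%R == A + B)%MS.
  have sA : (A <= (A + B)%R)%MS.
    by rewrite -{1}PA -[P *m A]addr0 -PB -mulmxDr submxMl.
  apply/andP; split; first exact: addmx_sub_adds.
  by rewrite addsmx_sub sA -{1}(addKr A B) addmx_sub // eqmx_opp.
rewrite (eqmx_rank eqAB) mxrank_disjoint_sum //.
have /submxP [DA eA] := capmxSl A B.
have /submxP [DB eB] := capmxSr A B.
by rewrite eA -AQ mulmxA -eA eB -mulmxA BQ mulmx0.
Qed.

Lemma mul_copid_mxE m n r (A : 'M[K]_(m, n)) i j :
  (copid_mx r *m A) i j = if (r <= i)%N then A i j else 0.
Proof.
rewrite mulmxBl mul1mx !mxE (bigD1 i) //= big1 => [|k nki]; last first.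
  by rewrite !mxE val_eqE eq_sym (negPf nki) mul0r.
by rewrite !mxE eqxx /= ltnNge addr0; case: (r <= i)%N; rewrite ?mul1r ?subrr ?mul0r ?subr0.
Qed.

Lemma mulmx_copidE m n r (A : 'M[K]_(m, n)) i j :
  (A *m copid_mx r) i j = if (r <= j)%N then A i j else 0.
Proof.
have tr_copid : (copid_mx r)^T = copid_mx r :> 'M[K]_n.
  by rewrite linearB /= trmx1 tr_pid_mx.
by rewrite -[A *m _]trmxK trmx_mul tr_copid mxE mul_copid_mxE !mxE.
Qed.

Lemma copid_mulmx_copidE m n R C (S : 'M[K]_(m, n)) i j :
  (copid_mx R *m S *m copid_mx C) i j =
  if (R <= i)%N && (C <= j)%N then S i j else 0.
Proof. by rewrite mulmx_copidE mul_copid_mxE; case: (R <= i)%N; case: (C <= j)%N. Qed.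

Lemma mxrank_block_pid m n R C (S : 'M[K]_(m, n)) :
  (R <= m)%N -> (C <= n)%N ->
  \rank (block_mx S (pid_mx R) (pid_mx C) 0 : 'M_(m + C, n + R)) =
  (\rank (copid_mx R *m S *m copid_mx C) + (C + R))%N.
Proof.
move=> leRm leCn; set S' := copid_mx R *m S *m copid_mx C.
(* Row and column operations with the identity blocks clear the first R rows and
   the first C columns of S. *)
pose P : 'M[K]_(m + C) := block_mx 1 (- (copid_mx R *m S *m pid_mx C)) 0 1.
pose Q : 'M[K]_(n + R) := block_mx 1 0 (- (pid_mx R *m S)) 1.
have eliminate : P *m block_mx S (pid_mx R) (pid_mx C) 0 *m Q =
                 block_mx S' (pid_mx R) (pid_mx C) 0.
  rewrite !mulmx_block !(mulmx0, mul0mx, mulmx1, mul1mx, addr0, add0r).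
  rewrite mulmxN mulmxA pid_mx_id // mulNmx -mulmxA pid_mx_id //.
  congr block_mx; rewrite addrAC /S' /copid_mx mulmxBl mul1mx.
  by rewrite [in RHS]mulmxBr mulmx1.
have fullP : row_full P.
  by rewrite row_full_unit unitmxE det_ublock !det1 mulr1 unitr1.
have freeQ : row_free Q.
  by rewrite row_free_unit unitmxE det_lblock !det1 mulr1 unitr1.
have -> : \rank (block_mx S (pid_mx R) (pid_mx C) 0 : 'M_(m + C, n + R)) =
          \rank (block_mx S' (pid_mx R) (pid_mx C) 0 : 'M_(m + C, n + R)).
  by rewrite -eliminate (mxrankMfree _ freeQ) (eqmxMfull _ fullP).
have -> : block_mx S' (pid_mx R) (pid_mx C) 0 =
          block_mx S' 0 0 0 + block_mx 0 (pid_mx R) (pid_mx C) 0 :> 'M_(m + C, n + R).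
  by rewrite add_block_mx !(addr0, add0r).
rewrite (mxrank_add_disjoint (P := block_mx (copid_mx R) 0 0 0)
                                          (Q := block_mx (copid_mx C) 0 0 0)).
- rewrite rank_diag_block_mx mxrank0 addn0 block_mxEv -addsmxE addsmxC addsmxE.
  by rewrite -block_mxEv rank_diag_block_mx !rank_pid_mx.
- by rewrite mulmx_block !(mulmx0, mul0mx, addr0) /S' !mulmxA copid_mx_id.
- by rewrite mulmx_block !(mulmx0, mul0mx, addr0) mul_copid_mx_pid // block_mx0.
- by rewrite mulmx_block !(mulmx0, mul0mx, addr0) /S' -!mulmxA copid_mx_id.
- by rewrite mulmx_block !(mulmx0, mul0mx, addr0) mul_pid_mx_copid // block_mx0.
Qed.

Lemma mxrank_block_pid_min m n R C (S : 'M[K]_(m, n)) :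
  (R <= m)%N -> (C <= n)%N ->
  \rank (block_mx S (pid_mx R) (pid_mx C) 0 : 'M_(m + C, n + R)) = (C + R)%N <->
  (forall (i : 'I_m) (j : 'I_n), (R <= i)%N -> (C <= j)%N -> S i j = 0).
Proof.
move=> leRm leCn; rewrite mxrank_block_pid // -{2}[(C + R)%N]add0n.
split=> [/addIn/eqP | S0].
  rewrite mxrank_eq0 => /eqP/matrixP S'0 i j leRi leCj.
  by move: (S'0 i j); rewrite copid_mulmx_copidE leRi leCj mxE.
suff -> : copid_mx R *m S *m copid_mx C = 0 by rewrite mxrank0.
apply/matrixP => i j; rewrite copid_mulmx_copidE mxE.
by case: ifP => // /andP[]; exact: S0.
Qed.

Lemma nw_rankE m n (Z : 'M[K]_(m, n)) r c (ler : (r <= m)%N) (lec : (c <= n)%N) :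
  nw_rank Z r c = \rank (\matrix_(i < r, j < c) Z (widen_ord ler i) (widen_ord lec j)).
Proof.
rewrite /nw_rank; move: (geq_minr r m) (geq_minr c n).
rewrite (minn_idPl ler) (minn_idPl lec) => ler' lec'.
by congr (\rank _); apply/matrixP => i j; rewrite !mxE; congr (Z _ _); apply: val_inj.
Qed.

Lemma nw_rank_eq0 m n (A : 'M[K]_(m, n)) r c :
  (r <= m)%N -> (c <= n)%N ->
  nw_rank A r c = 0%N <->
  (forall (i : 'I_m) (j : 'I_n), (i < r)%N -> (j < c)%N -> A i j = 0).
Proof.
move=> ler lec; rewrite (nw_rankE _ ler lec); split.
  move/eqP; rewrite mxrank_eq0 => /eqP A0 i j ltir ltjc.
  move/matrixP: A0 => /(_ (Ordinal ltir) (Ordinal ltjc)); rewrite !mxE.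
  have -> : widen_ord ler (Ordinal ltir) = i by apply: val_inj.
  by have -> : widen_ord lec (Ordinal ltjc) = j by apply: val_inj.
move=> A0; apply/eqP; rewrite mxrank_eq0; apply/eqP/matrixP => i j.
by rewrite !mxE; apply: A0 => /=; apply: ltn_ord.
Qed.

Lemma nw_rank_block_ul m1 m2 n1 n2 (A : 'M[K]_(m1, n1)) (B : 'M_(m1, n2))
    (C : 'M_(m2, n1)) (D : 'M_(m2, n2)) r c :
  (r <= m1)%N -> (c <= n1)%N -> nw_rank (block_mx A B C D) r c = nw_rank A r c.
Proof.
move=> ler lec; have ler' := leq_trans ler (leq_addr m2 m1).
have lec' := leq_trans lec (leq_addr n2 n1).
rewrite (nw_rankE _ ler lec) (nw_rankE _ ler' lec'); congr (\rank _).
apply/matrixP => i j; rewrite [LHS]mxE [RHS]mxE.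
have -> : widen_ord ler' i = lshift m2 (widen_ord ler i) by apply: val_inj.
have -> : widen_ord lec' j = lshift n2 (widen_ord lec j) by apply: val_inj.
by rewrite block_mxEul.
Qed.

Lemma nw_rank_block_unit m n R C (S : 'M[K]_(m, n)) :
  (R <= m)%N -> (C <= n)%N ->
  nw_rank (block_mx S 1%:M 1%:M 0 : 'M_(m + n, n + m)) (m + C) (n + R) =
  \rank (block_mx S (pid_mx R) (pid_mx C) 0 : 'M_(m + C, n + R)).
Proof.
move=> leRm leCn; have ler : (m + C <= m + n)%N by rewrite leq_add2l.
have lec : (n + R <= n + m)%N by rewrite leq_add2l.
rewrite (nw_rankE _ ler lec); congr (\rank _); apply/matrixP => i j; rewrite mxE.
have row_l (k : 'I_m) : widen_ord ler (lshift C k) = lshift n k by apply: val_inj.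
have row_r (k : 'I_C) : widen_ord ler (rshift m k) = rshift m (widen_ord leCn k).
  exact: val_inj.
have col_l (k : 'I_n) : widen_ord lec (lshift R k) = lshift m k by apply: val_inj.
have col_r (k : 'I_R) : widen_ord lec (rshift n k) = rshift n (widen_ord leRm k).
  exact: val_inj.
case: (split_ordP i) => i' ->; case: (split_ordP j) => j' ->;
  rewrite ?row_l ?row_r ?col_l ?col_r ?block_mxEul ?block_mxEur ?block_mxEdl ?block_mxEdr //.
- by rewrite !mxE -val_eqE /=; case: eqP => // ->; rewrite ltn_ord.
- by rewrite !mxE /= ltn_ord andbT.
- by rewrite !mxE.
Qed.

End BlockRank.

Lemma interval_index (f : nat -> nat) lo hi r :
  (lo <= hi)%N -> (f lo <= r < f hi)%N ->
  exists a, [/\ (lo <= a < hi)%N, (f a <= r)%N & (r < f a.+1)%N].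
Proof.
move=> + /andP[flo]; elim: hi => [|hi IH] lohi fhi.
  by move: lohi flo fhi; rewrite leqn0 => /eqP ->; lia.
have {}lohi : (lo <= hi)%N.
  rewrite leqNgt; apply/negP => hilo; have lo_eq : lo = hi.+1 by lia.
  by move: flo fhi; rewrite lo_eq; lia.
have [rlt | rge] := ltnP r (f hi); last by exists hi; rewrite lohi ltnSn.
have [a [/andP[loa ahi] far rfa]] := IH lohi rlt.
by exists a; rewrite loa ltnW.
Qed.

Lemma interval_index_rev (f : nat -> nat) lo hi c :
  (lo <= hi)%N -> (f hi <= c < f lo)%N ->
  exists b, [/\ (lo <= b < hi)%N, (f b.+1 <= c)%N & (c < f b)%N].
Proof.
move=> lohi fc; have := @interval_index (fun k => f (lo + hi - k)%N) lo hi c lohi.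
rewrite /= addKn addnK => /(_ fc) [a [/andP[loa ahi] fac fca]].
exists (lo + hi - a.+1)%N; split=> //; first lia.
by rewrite -subSn ?subSS //; lia.
Qed.

(* Block column x_k is the column range [xcols (k+1), xcols k); thus
   xoff dx n k = xcols dx n k.+1 and dX dx n = xcols dx n 1. *)
Definition xcols (dx : nat -> nat) (n k : nat) : nat := (\sum_(k <= l < n.+1) dx l)%N.

Lemma yoffS dy k : yoff dy k.+1 = (yoff dy k + dy k)%N.
Proof. by rewrite /yoff big_ord_recr. Qed.

Lemma leq_yoff dy : {homo yoff dy : a b / (a <= b)%N}.
Proof. by apply: homo_leq => [//|b a c|k]; [exact: leq_trans | rewrite yoffS leq_addr]. Qed.

Lemma yoff_ltn dy a b r : (yoff dy a <= r < yoff dy b)%N -> (a < b)%N.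
Proof. by move=> ar; rewrite ltnNge; apply/negP => /(leq_yoff dy); lia. Qed.

Lemma xcolsS dx n k : (k <= n)%N -> xcols dx n k = (dx k + xcols dx n k.+1)%N.
Proof. by move=> lekn; rewrite /xcols big_ltn. Qed.

Lemma xcols_out dx n k : (n < k)%N -> xcols dx n k = 0%N.
Proof. by move=> ltnk; rewrite /xcols big_geq. Qed.

Lemma geq_xcols dx n : {homo xcols dx n : a b / (a <= b)%N >-> (b <= a)%N}.
Proof.
apply: homo_leq => [//|b a c ba cb|k]; first exact: leq_trans cb ba.
case: (leqP k n) => [lekn | ltnk]; first by rewrite (xcolsS dx lekn) leq_addl.
by rewrite !xcols_out // ltnW.
Qed.

Lemma xcols_ltn dx n a b c : (xcols dx n a <= c < xcols dx n b)%N -> (b < a)%N.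
Proof. by move=> ac; rewrite ltnNge; apply/negP => /(geq_xcols dx n); lia. Qed.

Lemma yoff_block_unique dy a a' r :
  (yoff dy a <= r < yoff dy a.+1)%N -> (yoff dy a' <= r < yoff dy a'.+1)%N -> a = a'.
Proof. by have := @yoff_ltn dy a a'.+1 r; have := @yoff_ltn dy a' a.+1 r; lia. Qed.

Lemma xcols_block_unique dx n b b' c :
  (xcols dx n b.+1 <= c < xcols dx n b)%N -> (xcols dx n b'.+1 <= c < xcols dx n b')%N ->
  b = b'.
Proof. by have := @xcols_ltn dx n b.+1 b' c; have := @xcols_ltn dx n b'.+1 b c; lia. Qed.

Lemma xcols_block_range dx n b c :
  (xcols dx n b.+1 <= c < xcols dx n b)%N -> (c < xcols dx n 1)%N -> (0 < b <= n)%N.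
Proof.
have := @xcols_ltn dx n b.+1 1 c; have := @xcols_ltn dx n n.+1 b c.
by rewrite (xcols_out dx (ltnSn n)); lia.
Qed.

Lemma yoff_index dy n (r : 'I_(dY dy n)) :
  exists a, [/\ (a <= n)%N, (yoff dy a <= r)%N & (r < yoff dy a.+1)%N].
Proof.
have [|a [/andP[_ lean] ar ra]] := @interval_index (yoff dy) 0 n.+1 r (leq0n _).
  by rewrite /= [yoff _ 0]big_ord0 ltn_ord.
by exists a.
Qed.

Lemma xcols_index dx n (c : 'I_(dX dx n)) :
  exists b, [/\ (0 < b <= n)%N, (xcols dx n b.+1 <= c)%N & (c < xcols dx n b)%N].
Proof.
have [//||b [/andP[gt0b lebn] bc cb]] := @interval_index_rev (xcols dx n) 1 n.+1 c.
  by rewrite xcols_out // ltn_ord.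
by exists b; rewrite gt0b.
Qed.

Section EmbedBlock.

Variable K : fieldType.

Definition entry0 p q (A : 'M[K]_(p, q)) (i j : nat) : K :=
  if insub i is Some i' then if insub j is Some j' then A i' j' else 0 else 0.

Lemma entry0E p q (A : 'M[K]_(p, q)) (i : 'I_p) (j : 'I_q) : entry0 A i j = A i j.
Proof. by rewrite /entry0 !valK. Qed.

Lemma entry0_out p q (A : 'M[K]_(p, q)) i j :
  ~~ ((i < p) && (j < q))%N -> entry0 A i j = 0.
Proof.
rewrite negb_and /entry0 => /orP[ge_ip | ge_jq]; first by rewrite insubN.
by case: insub => // ?; rewrite insubN.
Qed.

Lemma sum_indicator_ord p (k : nat) (F : 'I_p -> K) :
  \sum_(a < p) (k == a)%:R * F a = if insub k is Some a then F a else 0.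
Proof.
case: insubP => [a _ <- | ge_kp].
  rewrite (bigD1 a) //= eqxx mul1r big1 ?addr0 // => b neq_ba.
  by rewrite val_eqE eq_sym (negPf neq_ba) mul0r.
rewrite big1 // => a _; case: eqP => [k_eq | _]; last by rewrite mul0r.
by move: ge_kp; rewrite k_eq ltn_ord.
Qed.

Lemma embed_blockE m m' p q ro co (A : 'M[K]_(p, q)) (r : 'I_m) (c : 'I_m') :
  embed_block m m' ro co A r c =
  if (ro <= r)%N && (co <= c)%N then entry0 A (r - ro) (c - co) else 0.
Proof.
have at_block (a b : nat) : (((r : nat) == ro + a) && ((c : nat) == co + b))%N =
    ((ro <= r) && (co <= c))%N && ((r - ro == a) && (c - co == b))%N.
  by apply/idP/idP; lia.
rewrite mxE; under eq_bigr do under eq_bigr do rewrite at_block.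
case: ifP => [_ | out] /=; last first.
  by rewrite big1 // => a _; rewrite big1 // => b _; rewrite mul0r.
under eq_bigr do under eq_bigr do rewrite -mulnb natrM -mulrA.
under eq_bigr do rewrite -big_distrr /= sum_indicator_ord.
by rewrite sum_indicator_ord.
Qed.

Lemma embed_block_in m m' p q ro co (A : 'M[K]_(p, q)) (r : 'I_m) (c : 'I_m') :
  (ro <= r)%N -> (co <= c)%N -> embed_block m m' ro co A r c = entry0 A (r - ro) (c - co).
Proof. by move=> ror coc; rewrite embed_blockE ror coc. Qed.

Lemma embed_block_row_out m m' p q ro co (A : 'M[K]_(p, q)) (r : 'I_m) (c : 'I_m') :
  ~~ (ro <= r < ro + p)%N -> embed_block m m' ro co A r c = 0.
Proof.
move=> rout; rewrite embed_blockE; case: ifP => // /andP[ror _].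
by apply: entry0_out; apply: contra rout; lia.
Qed.

Lemma embed_block_col_out m m' p q ro co (A : 'M[K]_(p, q)) (r : 'I_m) (c : 'I_m') :
  ~~ (co <= c < co + q)%N -> embed_block m m' ro co A r c = 0.
Proof.
move=> cout; rewrite embed_blockE; case: ifP => // /andP[_ coc].
by apply: entry0_out; apply: contra cout; lia.
Qed.

End EmbedBlock.

Section QuiverMatrix.

Variables (K : fieldType) (n : nat) (dy dx : nat -> nat).

Lemma MQE (V : rep K dy dx) (r : 'I_(dY dy n)) (c : 'I_(dX dx n)) a b :
  (yoff dy a <= r < yoff dy a.+1)%N -> (0 < b <= n)%N ->
  (xcols dx n b.+1 <= c < xcols dx n b)%N ->
  MQ n V r c =
    (if a == b.-1 then entry0 (Valpha V b) (r - yoff dy b.-1) (c - xcols dx n b.+1) else 0)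
  + (if a == b then entry0 (Vbeta V b) (r - yoff dy b) (c - xcols dx n b.+1) else 0).
Proof.
move=> ar /andP[b_gt0 b_len] cb.
have in_col i : (i <= n)%N -> (xoff dx n i <= c < xoff dx n i + dx i)%N = (i == b).
  move=> lein; rewrite addnC -(xcolsS dx lein).
  by apply/idP/eqP => [ci | ->] //; exact: xcols_block_unique ci cb.
have in_row i : (yoff dy i <= r < yoff dy i + dy i)%N = (a == i).
  by rewrite -yoffS; apply/idP/eqP => [ri | <-] //; exact: yoff_block_unique ar ri.
rewrite /MQ summxE (bigD1_seq b) ?iota_uniq ?mem_index_iota ?b_gt0 //=.
rewrite big1_seq ?addr0 => [|i /andP[neq_ib]]; last first.
  rewrite mem_index_iota => /andP[_ lein].
  by rewrite mxE !embed_block_col_out ?addr0 // in_col.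
rewrite mxE; congr (_ + _).
  case: eqP => [a_eq | /eqP ne_ab].
    by apply: embed_block_in; [rewrite -a_eq; case/andP: ar | case/andP: cb].
  by apply: embed_block_row_out; rewrite in_row.
case: eqP => [a_eq | /eqP ne_ab].
  by apply: embed_block_in; [rewrite -a_eq; case/andP: ar | case/andP: cb].
by apply: embed_block_row_out; rewrite in_row.
Qed.

(* The block (y_a, x_b) carries alpha_b if a = b - 1 and beta_b if a = b. *)
Definition arrow_supported (S : 'M[K]_(dY dy n, dX dx n)) : Prop :=
  forall (r : 'I_(dY dy n)) (c : 'I_(dX dx n)) a b,
    (yoff dy a <= r < yoff dy a.+1)%N -> (xcols dx n b.+1 <= c < xcols dx n b)%N ->
    a != b.-1 -> a != b -> S r c = 0.

Lemma MQ_arrow_supported (V : rep K dy dx) : arrow_supported (MQ n V).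
Proof.
move=> r c a b ar cb ne_a_pb ne_ab.
have b_range := xcols_block_range cb (ltn_ord c).
by rewrite (MQE V ar b_range cb) (negPf ne_a_pb) (negPf ne_ab) addr0.
Qed.

Lemma arrow_supported_MQ (S : 'M[K]_(dY dy n, dX dx n)) :
  arrow_supported S -> exists V : rep K dy dx, S = MQ n V.
Proof.
move=> S_supp.
exists (Rep (fun i => \matrix_(p < dy i.-1, q < dx i)
                        entry0 S (yoff dy i.-1 + p) (xcols dx n i.+1 + q))
            (fun i => \matrix_(p < dy i, q < dx i)
                        entry0 S (yoff dy i + p) (xcols dx n i.+1 + q))).
apply/matrixP => r c.
have [a [_ ar ra]] := yoff_index r; have [b [b_range bc cb]] := xcols_index c.
have /andP[_ b_len] := b_range.
rewrite (MQE _ (a := a) _ b_range) /= ?ar ?bc ?cb //.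
have lt_cb : (c - xcols dx n b.+1 < dx b)%N by move: cb; rewrite (xcolsS dx b_len); lia.
case: eqP => [a_eq | /eqP ne_a_pb]; case: eqP => [a_eq' | /eqP ne_ab].
- by move: b_range; rewrite -a_eq' a_eq; lia.
- have lt_ra : (r - yoff dy b.-1 < dy b.-1)%N by move: ar ra; rewrite a_eq yoffS; lia.
  rewrite addr0 -[(r - _)%N]/(Ordinal lt_ra : nat) -[(c - _)%N]/(Ordinal lt_cb : nat).
  by rewrite entry0E mxE /= !subnKC ?entry0E // -a_eq.
- have lt_ra : (r - yoff dy b < dy b)%N by move: ar ra; rewrite a_eq' yoffS; lia.
  rewrite add0r -[(r - _)%N]/(Ordinal lt_ra : nat) -[(c - _)%N]/(Ordinal lt_cb : nat).
  by rewrite entry0E mxE /= !subnKC ?entry0E // -a_eq'.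
- by rewrite addr0 (S_supp r c a b) ?ar ?ra ?bc ?cb.
Qed.

Lemma arrow_supported_iff (S : 'M[K]_(dY dy n, dX dx n)) :
  arrow_supported S <->
  (forall i j : nat, (i + 2 <= j)%N -> (j <= n)%N ->
     forall (r : 'I_(dY dy n)) (c : 'I_(dX dx n)),
       (r < yoff dy i.+1)%N -> (c < xcols dx n j)%N -> S r c = 0) /\
  (forall i j : nat, (2 <= i)%N -> (i <= n)%N -> (i.-1 <= j)%N -> (j <= n.-1)%N ->
     forall (r : 'I_(dY dy n)) (c : 'I_(dX dx n)),
       (yoff dy j.+1 <= r)%N -> (xcols dx n i <= c)%N -> S r c = 0).
Proof.
split=> [S_supp | [NW SE] r c a b ar cb ne_a_pb ne_ab].
  split=> [i j le_i2_j le_jn | i j le2i lein le_pi_j le_j_pn] r c rlt clt.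
  - have [a [_ ar ra]] := yoff_index r; have [b [_ bc cb]] := xcols_index c.
    have lt_ai : (a < i.+1)%N by apply: (@yoff_ltn dy _ _ r); rewrite ar rlt.
    have lt_jb : (j < b.+1)%N by apply: (@xcols_ltn dx n _ _ c); rewrite bc clt.
    by apply: (S_supp r c a b); rewrite ?ar ?ra ?bc ?cb //; lia.
  - have [a [_ ar ra]] := yoff_index r; have [b [_ bc cb]] := xcols_index c.
    have lt_ja : (j.+1 < a.+1)%N by apply: (@yoff_ltn dy _ _ r); rewrite rlt ra.
    have lt_bi : (b < i)%N by apply: (@xcols_ltn dx n _ _ c); rewrite clt cb.
    by apply: (S_supp r c a b); rewrite ?ar ?ra ?bc ?cb //; lia.
have /andP[b_gt0 b_len] := xcols_block_range cb (ltn_ord c).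
have le_an : (a <= n)%N by have := @yoff_ltn dy a n.+1 r; rewrite ltn_ord; lia.
case: (ltnP a b) => [lt_ab | le_ba].
  apply: (NW a b); rewrite ?(andP ar).2 ?(andP cb).2 //; lia.
apply: (SE b.+1 a.-1); rewrite ?prednK ?(andP ar).1 ?(andP cb).1 //; lia.
Qed.

Lemma block_mx_in_im_zeta (S : 'M[K]_(dY dy n, dX dx n)) :
  (exists V : rep K dy dx, block_mx S 1%:M 1%:M 0 = zeta n V) <-> arrow_supported S.
Proof.
split=> [[V /eq_block_mx[-> _ _ _]] | /arrow_supported_MQ[V ->]].
  exact: MQ_arrow_supported.
by exists V.
Qed.

Lemma rank_yx_block_unit_eq0 (S : 'M[K]_(dY dy n, dX dx n)) i j : (i <= n)%N -> (0 < j)%N ->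
  rank_yx (block_mx S 1%:M 1%:M 0) i j = 0%N <->
  (forall (r : 'I_(dY dy n)) (c : 'I_(dX dx n)),
     (r < yoff dy i.+1)%N -> (c < xcols dx n j)%N -> S r c = 0).
Proof.
move=> lein gt0j; have le_yi : (yoff dy i.+1 <= dY dy n)%N by apply: leq_yoff.
have le_xj : (xcols dx n j <= dX dx n)%N by apply: geq_xcols.
by rewrite /rank_yx nw_rank_block_ul // nw_rank_eq0.
Qed.

Lemma rank_xy_block_unit_min (S : 'M[K]_(dY dy n, dX dx n)) i j : (0 < i)%N -> (j <= n)%N ->
  rank_xy (block_mx S 1%:M 1%:M 0) i j = (xcols dx n i + yoff dy j.+1)%N <->
  (forall (r : 'I_(dY dy n)) (c : 'I_(dX dx n)),
     (yoff dy j.+1 <= r)%N -> (xcols dx n i <= c)%N -> S r c = 0).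
Proof.
move=> gt0i lejn; have le_yj : (yoff dy j.+1 <= dY dy n)%N by apply: leq_yoff.
have le_xi : (xcols dx n i <= dX dx n)%N by apply: geq_xcols.
by rewrite /rank_xy nw_rank_block_unit // mxrank_block_pid_min.
Qed.

End QuiverMatrix.

Unset Implicit Arguments.

Theorem lemmaA2 (K : fieldType) (n : nat) (dy dx : nat -> nat)
  (Z : 'M[K]_(dY dy n + dX dx n, dX dx n + dY dy n)) :
  in_Ycirc Z ->
  ((exists V : rep K dy dx, Z = zeta n V) <->
   ((forall i j : nat, (i + 2 <= j)%N -> (j <= n)%N -> rank_yx Z i j = 0%N) /\
    (forall i j : nat, (2 <= i)%N -> (i <= n)%N -> (i.-1 <= j)%N -> (j <= n.-1)%N ->
       rank_xy Z i j = (\sum_(i <= k < n.+1) dx k + \sum_(k < j.+1) dy k)%N))).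
Proof.
move=> [S ->]; rewrite block_mx_in_im_zeta arrow_supported_iff.
split=> -[NW SE]; split=> [i j le_i2_j le_jn | i j le2i lein le_pi_j le_j_pn].
- apply/rank_yx_block_unit_eq0; [lia | lia | exact: NW].
- apply/rank_xy_block_unit_min; [lia | lia | exact: SE].
- apply/rank_yx_block_unit_eq0; [lia | lia | exact: NW].
- apply/rank_xy_block_unit_min; [lia | lia | exact: SE].
Qed.
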